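(* Let $\mathfrak h=\mathfrak{su}(p',q')$ with $0<p'<q'$, with restricted root data as in the context, and let $\mathfrak h^0\subset\mathfrak h$ be a subalgebra invariant under $\mathrm{ad}\,\mathfrak b_H$. Then: (1) if $\mathfrak a_H\subset\mathfrak h^0$, then $\mathfrak b_H\subset\mathfrak h^0$; (2) for $i',j'$ (possibly equal), if $\mathfrak h_{-\alpha_{i'}-\alpha_{j'}}\cap\mathfrak h^0\ne0$, then $\mathfrak h_{-\alpha_{i'}}\subset\mathfrak h^0$; (3) if $p'\ge2$, $i'\ne j'$, $\mathfrak h_{-\alpha_{i'}}\subset\mathfrak h^0$ and $\mathfrak h_{-\alpha_{j'}}\cap\mathfrak h^0\ne0$, then $\mathfrak h_{-\alpha_{j'}}\subset\mathfrak h^0$.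
   Context: $\mathfrak a_H$ is a maximal $\mathbf R$-split abelian subalgebra of $\mathfrak h$; the restricted root system is $BC_{p'}$, with short roots $\alpha_1,\dots,\alpha_{p'}\in\mathfrak a_H^*$ chosen so that the positive roots are $\{\alpha_{k'}\}\cup\{\alpha_{i'}-\alpha_{j'}:i'<j'\}\cup\{\alpha_{i'}+\alpha_{j'}\}$ (the last including $2\alpha_{i'}$). Root spaces: $\dim\mathfrak h_{\pm\alpha_{k'}}=2(q'-p')$, $\dim\mathfrak h_{\pm\alpha_{i'}\pm\alpha_{j'}}=2$ for $i'\ne j'$, $\dim\mathfrak h_{\pm2\alpha_{i'}}=1$. $\mathfrak b_H=\mathfrak a_H\oplus\bigoplus_{\alpha>0}\mathfrak h_\alpha$ (Borel subalgebra; the compact part of the centralizer of $\mathfrak a_H$ is omitted from $\mathfrak b_H$ here). *)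

From mathcomp Require Import all_boot all_order all_algebra.
From mathcomp Require Import complex.
From mathcomp Require Import reals.
Set Implicit Arguments. Unset Strict Implicit. Unset Printing Implicit Defensive.
Import Order.TTheory GRing.Theory Num.Theory.
Local Open Scope ring_scope.

Section SU.
Variables (R : realType) (p q : nat).

(* size of the matrices: p + (q - p) + p  (= p + q when p <= q) *)
Definition Nsz : nat := (p + (q - p) + p)%N.

Local Notation C := (complex R).
Local Notation M := 'M[C]_Nsz.

(* Hermitian form of signature (p,q): blocks of sizes p, q-p, p,
   J = [[0,0,I],[0,-I,0],[I,0,0]] *)
Definition Jform : M :=
  \matrix_(i < Nsz, j < Nsz)
    if ((i < p)%N && (j == (i + q)%N :> nat)) || ((j < p)%N && (i == (j + q)%N :> nat))
    then 1
    else if ((p <= i)%N && (i < q)%N && (i == j :> nat)) then -1 else 0.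

Definition adjmx (X : M) : M := (map_mx (@conjc R) X)^T.

Definition lie (X Y : M) : M := X *m Y - Y *m X.

Definition in_h (X : M) : Prop := adjmx X *m Jform + Jform *m X = 0 /\ \tr X = 0.

Definition aH (t : nat -> R) : M :=
  \matrix_(i < Nsz, j < Nsz)
    if i == j then
      (if (i < p)%N then real_complex R (t i)
       else if (q <= i)%N then real_complex R (- t (i - q)%N) else 0)
    else 0.

Definition in_aH (X : M) : Prop := exists t : nat -> R, X = aH t.

(* restricted root space for the functional lam on a_H (lam t = lam(aH t)) *)
Definition rootsp (lam : (nat -> R) -> R) (X : M) : Prop :=
  in_h X /\ forall t, lie (aH t) X = real_complex R (lam t) *: X.

Definition alpha (i : nat) : (nat -> R) -> R := fun t => t i.

(* b_H = a_H + sum of positive root spaces; positive roots: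
   alpha_k, alpha_i - alpha_j (i<j), alpha_i + alpha_j (i<=j, incl. 2 alpha_i) *)
Definition in_bH (X : M) : Prop :=
  exists (t : nat -> R) (Y1 : 'I_p -> M) (Y2 Y3 : 'I_p -> 'I_p -> M),
    (forall k : 'I_p, rootsp (alpha k) (Y1 k)) /\
    (forall i j : 'I_p, (i < j)%N -> rootsp (fun s => alpha i s - alpha j s) (Y2 i j)) /\
    (forall i j : 'I_p, (i <= j)%N -> rootsp (fun s => alpha i s + alpha j s) (Y3 i j)) /\
    X = aH t + \sum_(k < p) Y1 k
          + \sum_(i < p) \sum_(j < p | (i < j)%N) Y2 i j
          + \sum_(i < p) \sum_(j < p | (i <= j)%N) Y3 i j.

Definition is_subalg (h0 : M -> Prop) : Prop :=
  (forall X, h0 X -> in_h X) /\ h0 0 /\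
  (forall X Y, h0 X -> h0 Y -> h0 (X + Y)) /\
  (forall (r : R) X, h0 X -> h0 (real_complex R r *: X)) /\
  (forall X Y, h0 X -> h0 Y -> h0 (lie X Y)).

Definition adb_invariant (h0 : M -> Prop) : Prop :=
  forall Y X, in_bH Y -> h0 X -> h0 (lie Y X).

End SU.

(* Under [ad (aH t)] the matrix unit
   [E_ab] has weight [wt t a - wt t b], so a root space is cut out by a support
   condition: [h_{-alpha_i}] consists of the matrices [negroot_mx i u] (column [i]
   and row [q + i]), and the matrices [posroot_mx j v] lie in [h_{alpha_j}].
   (1) A root vector [Y] of [b_H] with root [lam] satisfies [[Y, H] = - lam(H) Y]
   for [H] in [a_H], so [a_H \subset h0] and invariance put every root vector of
   [b_H], hence [b_H], into [h0].
   (2) A nonzero [X0] in [h_{-alpha_i-alpha_j}] has [x := X0 (q + i) j <> 0], and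
   [[posroot_mx j v, X0] = negroot_mx i (- (v x)^* )]; taking [v = - u^* / x]
   reaches any [negroot_mx i u] in [h_{-alpha_i}].
   (3) If [X0 = negroot_mx j u] is a nonzero element of [h0] with [u k <> 0], the
   element [X] of [h_{-alpha_i}] built from the single coordinate [u k] gives
   [[X, X0] (q + i) j = |u k|^2 <> 0], a nonzero element of
   [h0 \cap h_{-alpha_i-alpha_j}], and (2) applies with [i] and [j] swapped.
   This only uses [i <> j], not [2 <= p]. *)

From mathcomp Require Import all_boot all_order all_algebra.
From mathcomp Require Import complex.
From mathcomp Require Import reals.
From mathcomp Require Import zify ring lra.
Set Implicit Arguments.
Unset Strict Implicit.
Unset Printing Implicit Defensive.

Import GRing.Theory Num.Theory.

Local Open Scope complex_scope.
Local Open Scope ring_scope.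

(* The additive skeleton of the Jacobi identity for commutators. *)
Lemma subr_jacobi (V : zmodType) (a b c d e f : V) :
  a - b - (c - d) = a - e - (f - d) + (e - c - (b - f)).
Proof.
rewrite !opprB addrA addrACA (addrA (a - e)) (addrA (d - f)) !subrK.
by rewrite -[LHS]addrA [LHS]addrACA [RHS]addrACA [- c - b]addrC.
Qed.

Section SUpq.
Variables (R : realType) (p q : nat).
Hypothesis ltn_pq : (p < q)%N.
Local Notation C := (complex R).
Local Notation N := (Nsz p q).
Local Notation M := 'M[C]_N.
Local Notation J := (Jform R p q).

Lemma ltn_Nsz (a : 'I_N) : (a < p + q)%N.
Proof. by case: a => a /=; rewrite /Nsz; lia. Qed.

(* Indices fall into the blocks [0, p), [p, q), [q, q + p);
   [topix i] is [i] and [botix i] is [q + i]. *)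
Definition mid (a : 'I_N) : bool := (p <= a < q)%N.

Lemma topix_subproof (i : 'I_p) : (i < N)%N.
Proof. by have := ltn_ord i; rewrite /Nsz; lia. Qed.
Lemma botix_subproof (i : 'I_p) : (q + i < N)%N.
Proof. by have := ltn_ord i; rewrite /Nsz; lia. Qed.

Definition topix (i : 'I_p) : 'I_N := Ordinal (topix_subproof i).
Definition botix (i : 'I_p) : 'I_N := Ordinal (botix_subproof i).

Lemma mid_top (i : 'I_p) : mid (topix i) = false.
Proof. by rewrite /mid /= leqNgt ltn_ord. Qed.
Lemma mid_bot (i : 'I_p) : mid (botix i) = false.
Proof. by rewrite /mid /= ltnNge leq_addr andbF. Qed.
Lemma eq_top_bot (i j : 'I_p) : (topix i == botix j) = false.
Proof. by apply/negbTE; rewrite -val_eqE /=; apply/eqP; have := ltn_ord i; lia. Qed.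
Lemma eq_bot_top (i j : 'I_p) : (botix i == topix j) = false.
Proof. by rewrite eq_sym eq_top_bot. Qed.
Lemma eq_top (i j : 'I_p) : (topix i == topix j) = (i == j).
Proof. by rewrite -!val_eqE. Qed.
Lemma eq_bot (i j : 'I_p) : (botix i == botix j) = (i == j).
Proof. by rewrite -!val_eqE /= eqn_add2l. Qed.
Lemma eq_mid_top (a : 'I_N) (i : 'I_p) : mid a -> (a == topix i) = false.
Proof. by apply: contraTF => /eqP ->; rewrite mid_top. Qed.
Lemma eq_mid_bot (a : 'I_N) (i : 'I_p) : mid a -> (a == botix i) = false.
Proof. by apply: contraTF => /eqP ->; rewrite mid_bot. Qed.

Definition ix_simpl := (mid_top, mid_bot, eq_top_bot, eq_bot_top, eq_top, eq_bot, eqxx).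

Definition Jperm_val (a : nat) : nat :=
  if (a < p)%N then (a + q)%N else if (q <= a)%N then (a - q)%N else a.

Lemma Jperm_subproof (a : 'I_N) : (Jperm_val a < N)%N.
Proof. by have := ltn_Nsz a; rewrite /Jperm_val /Nsz; repeat case: ifP; lia. Qed.

Definition Jperm (a : 'I_N) : 'I_N := Ordinal (Jperm_subproof a).
Definition Jsign (a : 'I_N) : C := if mid a then -1 else 1.

Lemma JpermK : involutive Jperm.
Proof.
move=> a; apply: ord_inj; have := ltn_Nsz a.
by rewrite /= /Jperm_val; repeat case: ifP; lia.
Qed.

Lemma Jsign_perm (a : 'I_N) : Jsign (Jperm a) = Jsign a.
Proof.
have := ltn_Nsz a; rewrite /Jsign /mid /= /Jperm_val.
by case: (ltnP a p) => ?; [|case: (leqP q a) => ?]; repeat case: ifP => //; lia.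
Qed.

Lemma conj_Jsign (a : 'I_N) : (Jsign a)^* = Jsign a.
Proof. by rewrite /Jsign; case: ifP; rewrite ?rmorphN rmorph1. Qed.

Lemma Jform_entry (a b : 'I_N) : J a b = if Jperm a == b then Jsign a else 0.
Proof.
have := ltn_Nsz a; have := ltn_Nsz b.
rewrite mxE /Jsign /mid -val_eqE /= /Jperm_val.
case: a b => [a ?] [b ?] /= *.
by case: (ltnP a p) => ?; [|case: (leqP q a) => ?]; repeat case: ifP => //; lia.
Qed.

Lemma Jperm_top (i : 'I_p) : Jperm (topix i) = botix i.
Proof. by apply: ord_inj; rewrite /= /Jperm_val ltn_ord addnC. Qed.
Lemma Jperm_bot (i : 'I_p) : Jperm (botix i) = topix i.
Proof. by rewrite -Jperm_top JpermK. Qed.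
Lemma Jperm_mid (a : 'I_N) : mid a -> Jperm a = a.
Proof. by rewrite /mid => ha; apply: ord_inj; rewrite /= /Jperm_val; repeat case: ifP; lia. Qed.

Lemma Jsign_top (i : 'I_p) : Jsign (topix i) = 1.
Proof. by rewrite /Jsign /mid /= leqNgt ltn_ord. Qed.
Lemma Jsign_bot (i : 'I_p) : Jsign (botix i) = 1.
Proof. by rewrite /Jsign /mid /= ifF //; lia. Qed.
Lemma Jsign_mid (a : 'I_N) : mid a -> Jsign a = -1.
Proof. by rewrite /Jsign => ->. Qed.

Lemma sum_single (F : 'I_N -> C) (c0 : 'I_N) :
  (forall c, c != c0 -> F c = 0) -> \sum_c F c = F c0.
Proof. by move=> F0; rewrite (bigD1 c0) //= big1 ?addr0. Qed.

Lemma mulmx_Jl (X : M) a b : (J *m X) a b = Jsign a * X (Jperm a) b.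
Proof.
rewrite mxE (sum_single (c0 := Jperm a)) ?Jform_entry ?eqxx // => c hc.
by rewrite Jform_entry eq_sym (negbTE hc) mul0r.
Qed.

Lemma adjmx_entry (X : M) a b : adjmx X a b = (X b a)^*.
Proof. by rewrite !mxE. Qed.

Lemma adjmx_Jr (X : M) a b : (adjmx X *m J) a b = (X (Jperm b) a)^* * Jsign b.
Proof.
rewrite mxE (sum_single (c0 := Jperm b)).
  by rewrite adjmx_entry Jform_entry JpermK eqxx Jsign_perm.
move=> c hc; rewrite Jform_entry; case: eqP => [Ec|]; last by rewrite mulr0.
by rewrite -Ec JpermK eqxx in hc.
Qed.

(* Membership in [h] says that [J *m X] is skew-hermitian, entrywise. *)
Definition Jskew_at (X : M) (a b : 'I_N) : C :=
  (X (Jperm b) a)^* * Jsign b + Jsign a * X (Jperm a) b.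

Lemma in_h_Jskew (X : M) : in_h X -> forall a b, Jskew_at X a b = 0.
Proof.
by case=> /matrixP hX _ a b; move: (hX a b); rewrite [LHS]mxE [RHS]mxE adjmx_Jr mulmx_Jl.
Qed.

Lemma Jskew_atC (X : M) a b : Jskew_at X b a = (Jskew_at X a b)^*.
Proof.
by rewrite /Jskew_at rmorphD !rmorphM /= conjCK !conj_Jsign; ring.
Qed.

Lemma in_h_of_support (X : M) (S : rel 'I_N) :
  (forall a b, X a b != 0 -> S a b) ->
  (forall a b, S a b -> Jskew_at X (Jperm a) b = 0) ->
  (forall a, X a a = 0) -> in_h X.
Proof.
move=> XS skewS diag0; split; last by rewrite /mxtrace big1.
apply/matrixP => a b; rewrite [LHS]mxE [RHS]mxE adjmx_Jr mulmx_Jl -/(Jskew_at X a b).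
case: (boolP (S (Jperm a) b)) => [/skewS|nSab]; first by rewrite JpermK.
case: (boolP (S (Jperm b) a)) => [/skewS|nSba]; rewrite ?JpermK.
  by rewrite Jskew_atC => /eqP; rewrite conjC_eq0 => /eqP.
have X0 u v : ~~ S u v -> X u v = 0 by move=> nS; apply/eqP; apply: contraNT nS => /XS.
by rewrite /Jskew_at (X0 _ _ nSab) (X0 _ _ nSba) conjC0 !(mul0r, mulr0) addr0.
Qed.

Lemma adjmxM (A B : M) : adjmx (A *m B) = adjmx B *m adjmx A.
Proof. by rewrite /adjmx map_mxM trmx_mul. Qed.

Lemma adjmxB (A B : M) : adjmx (A - B) = adjmx A - adjmx B.
Proof. by rewrite /adjmx map_mxB linearB. Qed.

Lemma in_h_lie (X Y : M) : in_h X -> in_h Y -> in_h (lie X Y).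
Proof.
move=> [/eqP hX _] [/eqP hY _]; rewrite !addr_eq0 in hX hY.
split; last by rewrite raddfB /= mxtrace_mulC subrr.
rewrite /lie adjmxB !adjmxM mulmxBl -!mulmxA (eqP hX) (eqP hY) !mulmxN !mulmxA.
by rewrite (eqP hX) (eqP hY) !mulNmx !opprK -!mulmxA -mulmxBr -mulmxDr addrA subrK subrr mulmx0.
Qed.

Lemma lie_jacobi (H X Y : M) : lie H (lie X Y) = lie (lie H X) Y + lie X (lie H Y).
Proof. by rewrite /lie !(mulmxBl, mulmxBr) !mulmxA; apply: subr_jacobi. Qed.

Lemma lieZl (c : C) (X Y : M) : lie (c *: X) Y = c *: lie X Y.
Proof. by rewrite /lie -scalemxAl -scalemxAr scalerBr. Qed.

Lemma lieZr (c : C) (X Y : M) : lie X (c *: Y) = c *: lie X Y.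
Proof. by rewrite /lie -scalemxAl -scalemxAr scalerBr. Qed.

Lemma lieC (X Y : M) : lie X Y = - lie Y X.
Proof. by rewrite /lie opprB. Qed.

Lemma lie_entry (X Y : M) a b : lie X Y a b = (X *m Y) a b - (Y *m X) a b.
Proof. by rewrite !mxE. Qed.

(* [wt t a] is the [a]-th diagonal entry of [aH t]. *)
Definition wt (t : nat -> R) (a : nat) : R :=
  if (a < p)%N then t a else if (q <= a)%N then - t (a - q)%N else 0.

Lemma wt_top t (i : 'I_p) : wt t (topix i) = t i.
Proof. by rewrite /wt /= ltn_ord. Qed.
Lemma wt_bot t (i : 'I_p) : wt t (botix i) = - t i.
Proof. by rewrite /wt /= ifF ?leq_addr ?addKn //; lia. Qed.
Lemma wt_mid t (a : 'I_N) : mid a -> wt t a = 0.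
Proof. by rewrite /mid /wt => ha; rewrite !ifF //; lia. Qed.

Lemma lie_aH_entry t (X : M) a b : lie (aH p q t) X a b = (wt t a - wt t b)%:C * X a b.
Proof.
have aHE (u v : 'I_N) : aH p q t u v = if u == v then (wt t u)%:C else 0.
  by rewrite mxE /wt; case: eqP => // _; repeat case: ifP.
rewrite !mxE (sum_single (c0 := a)) => [|c hc]; last by rewrite aHE eq_sym (negbTE hc) mul0r.
rewrite (sum_single (c0 := b)) => [|c hc]; last by rewrite aHE (negbTE hc) mulr0.
by rewrite !aHE !eqxx rmorphB /= mulrBl [X a b * _]mulrC.
Qed.

Lemma rootsp_entry lam (X : M) :
  rootsp lam X -> forall t a b, X a b != 0 -> wt t a - wt t b = lam t.
Proof.
case=> _ hX t a b Xab; move/matrixP: (hX t) => /(_ a b).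
rewrite lie_aH_entry mxE => /eqP; rewrite -subr_eq0 -mulrBl mulf_eq0 (negbTE Xab) orbF.
by rewrite subr_eq0 => /eqP /complexI.
Qed.

Lemma rootsp_of_entry lam (X : M) : in_h X ->
  (forall t a b, X a b != 0 -> wt t a - wt t b = lam t) -> rootsp lam X.
Proof.
move=> hX wtX; split=> // t; apply/matrixP => a b; rewrite lie_aH_entry mxE.
by have [->|/wtX ->] := eqVneq (X a b) 0; rewrite ?mulr0.
Qed.

Lemma rootsp_ext lam mu (X : M) : (forall t, lam t = mu t) -> rootsp lam X -> rootsp mu X.
Proof. by move=> lam_mu [hX adX]; split=> // t; rewrite -lam_mu. Qed.

Lemma rootsp0 lam : rootsp lam (0 : M).
Proof.
have adj0 : adjmx (0 : M) = 0 by apply/matrixP => a b; rewrite adjmx_entry !mxE conjC0.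
split; first by split; rewrite ?adj0 ?mulmx0 ?mul0mx ?addr0 ?mxtrace0.
by move=> t; rewrite /lie mulmx0 mul0mx subrr scaler0.
Qed.

Lemma rootsp_lie lam mu (X Y : M) :
  rootsp lam X -> rootsp mu Y -> rootsp (fun t => lam t + mu t) (lie X Y).
Proof.
move=> [hX adX] [hY adY]; split=> [|t]; first exact: in_h_lie.
by rewrite lie_jacobi adX adY lieZl lieZr -scalerDl rmorphD.
Qed.

Lemma negroot_support (i : 'I_p) (X : M) a b : rootsp (fun t => - alpha i t) X ->
  X a b != 0 -> (mid a && (b == topix i)) || ((a == botix i) && mid b).
Proof.
(* The constant weight [1] locates the blocks of [a] and [b], the indicator of [i] the rest. *)
move=> hX Xab; have := rootsp_entry hX (fun=> 1) Xab.
have := rootsp_entry hX (fun n => if n == i then 1 else 0) Xab.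
rewrite /alpha /wt /mid -!val_eqE /= eqxx; have := ltn_ord i.
case: (ltnP a p) => ?; [|case: (leqP q a) => ?].
all: case: (ltnP b p) => ?; [|case: (leqP q b) => ?]; rewrite /= => ? Ei E1.
all: try by exfalso; lra.
all: by move: Ei; case: eqP => ? Ei; rewrite ?andbT ?orbF; try (apply/eqP; lia); exfalso; lra.
Qed.

Lemma pairroot_support (i j : 'I_p) (X : M) a b :
  rootsp (fun t => - alpha i t - alpha j t) X -> X a b != 0 ->
  ((a == botix i) && (b == topix j)) || ((a == botix j) && (b == topix i)).
Proof.
move=> hX Xab; have := rootsp_entry hX (fun=> 1) Xab.
have := rootsp_entry hX (fun n => if n == i then 1 else 0) Xab.
have := rootsp_entry hX (fun n => if n == j then 1 else 0) Xab.
rewrite /alpha /wt -!val_eqE /= !eqxx; have := ltn_ord i; have := ltn_ord j.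
case: (ltnP a p) => ?; [|case: (leqP q a) => ?].
all: case: (ltnP b p) => ?; [|case: (leqP q b) => ?]; rewrite /= => ? ? Ej Ei E1.
all: try by exfalso; lra.
have [xi|xi] := eqVneq (a - q)%N i; have [bj|bj] := eqVneq (nat_of_ord b) j.
- by apply/orP; left; apply/andP; split; apply/eqP; lia.
- by move: Ej; rewrite xi (negbTE bj); lra.
- by move: Ei; rewrite bj (negbTE xi); lra.
move: Ei Ej; rewrite (negbTE xi) (negbTE bj) [(j == i :> nat)]eq_sym.
have [ij|ij] := eqVneq (nat_of_ord i) j; first by case: eqP; lra.
case: eqP => [bi|]; last by lra.
case: eqP => [xj|]; last by lra.
by move=> _ _; apply/orP; right; apply/andP; split; apply/eqP; lia.
Qed.

Lemma negroot_conj (i : 'I_p) (X : M) b : rootsp (fun t => - alpha i t) X -> mid b ->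
  X (botix i) b = (X b (topix i))^*.
Proof.
move=> [hX _] mb; move: (in_h_Jskew hX (topix i) b).
rewrite /Jskew_at Jperm_top (Jperm_mid mb) Jsign_top (Jsign_mid mb) mul1r mulrN1 addrC.
by move/eqP; rewrite subr_eq0 => /eqP.
Qed.

Definition negroot_mx (i : 'I_p) (u : 'I_N -> C) : M := \matrix_(a, b)
  if mid a && (b == topix i) then u a else if (a == botix i) && mid b then (u b)^* else 0.

Lemma rootsp_negroot_mx (i : 'I_p) u : rootsp (fun t => - alpha i t) (negroot_mx i u).
Proof.
pose S (a b : 'I_N) := mid a && (b == topix i) || (a == botix i) && mid b.
have suppS a b : negroot_mx i u a b != 0 -> S a b.
  by rewrite mxE /S /=; case: ifP => //; case: ifP => //; rewrite eqxx.
apply: rootsp_of_entry => [|t a b /suppS /orP[] /andP[]].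
- apply: (in_h_of_support suppS) => [a b /orP[] /andP[]|a].
  + move=> ma /eqP ->; rewrite /Jskew_at JpermK (Jperm_mid ma) Jperm_top Jsign_top (Jsign_mid ma).
    by rewrite !mxE !ix_simpl ma (eq_mid_bot _ ma) /= conjCK; ring.
  + move=> /eqP -> mb; rewrite /Jskew_at Jperm_bot Jperm_top (Jperm_mid mb).
    rewrite Jsign_top (Jsign_mid mb).
    by rewrite !mxE !ix_simpl mb (eq_mid_top _ mb) /=; ring.
  + rewrite mxE; case: ifP => [/andP[ma /eqP ea]|_]; first by rewrite ea mid_top in ma.
    by case: ifP => // /andP[/eqP ea]; rewrite ea mid_bot.
- by move=> ma /eqP ->; rewrite (wt_mid _ ma) wt_top /alpha sub0r.
- by move=> /eqP -> mb; rewrite (wt_mid _ mb) wt_bot /alpha subr0.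
Qed.

Lemma pairroot_conj (i j : 'I_p) (X : M) : rootsp (fun t => - alpha i t - alpha j t) X ->
  X (botix j) (topix i) = - (X (botix i) (topix j))^*.
Proof.
move=> [hX _]; move: (in_h_Jskew hX (topix j) (topix i)).
rewrite /Jskew_at !Jperm_top !Jsign_top mulr1 mul1r addrC => /eqP.
by rewrite addr_eq0 => /eqP.
Qed.

Lemma pairroot_col (i j : 'I_p) (X : M) a : rootsp (fun t => - alpha i t - alpha j t) X ->
  X a (topix j) = if a == botix i then X (botix i) (topix j) else 0.
Proof.
move=> hX; have [-> //|ai] := eqVneq a (botix i).
apply/eqP; apply: contraT => /(pairroot_support hX); rewrite eqxx andbT (negbTE ai) /= eq_top.
by case/andP=> /eqP ea /eqP ji; rewrite ea ji eqxx in ai.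
Qed.

Lemma pairroot_row (i j : 'I_p) (X : M) b : rootsp (fun t => - alpha i t - alpha j t) X ->
  X (botix j) b = if b == topix i then - (X (botix i) (topix j))^* else 0.
Proof.
move=> hX; have [-> |bi] := eqVneq b (topix i); first exact: pairroot_conj.
apply/eqP; apply: contraT => /(pairroot_support hX); rewrite eqxx (negbTE bi) andbF orbF eq_bot.
by case/andP=> /eqP ij /eqP eb; rewrite eb ij eqxx in bi.
Qed.

Lemma pairroot_neq0 (i j : 'I_p) (X : M) : rootsp (fun t => - alpha i t - alpha j t) X ->
  X != 0 -> X (botix i) (topix j) != 0.
Proof.
move=> hX; apply: contraNN => /eqP x0; apply/eqP/matrixP => a b; rewrite mxE.
have [->|/(pairroot_support hX)] := eqVneq (X a b) 0; first by [].
case/orP=> /andP[/eqP -> /eqP ->]; first by rewrite x0.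
by rewrite (pairroot_conj hX) x0 conjC0 oppr0.
Qed.

Lemma negrootE (i : 'I_p) (X : M) : rootsp (fun t => - alpha i t) X ->
  X = negroot_mx i (fun a => X a (topix i)).
Proof.
move=> hX; apply/matrixP => a b; rewrite mxE.
case: ifP => [/andP[_ /eqP -> //]|nS1]; case: ifP => [/andP[/eqP -> mb]|nS2].
  exact: negroot_conj.
by have [//|/(negroot_support hX)] := eqVneq (X a b) 0; rewrite nS1 nS2.
Qed.

Lemma eq_negroot_mx (i : 'I_p) u w :
  (forall a, mid a -> u a = w a) -> negroot_mx i u = negroot_mx i w.
Proof.
move=> uw; apply/matrixP => a b; rewrite !mxE.
by case: ifP => [/andP[ma _]|_]; [|case: ifP => [/andP[_ mb]|_]]; rewrite ?uw.
Qed.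

Lemma negroot_mx_neq0 (i : 'I_p) u : negroot_mx i u != 0 -> exists2 k, mid k & u k != 0.
Proof.
move=> nz; have /existsP[k /andP[mk uk]] : [exists k, mid k && (u k != 0)]; last by exists k.
apply: contraNT nz => /existsPn u0; apply/eqP.
rewrite (@eq_negroot_mx _ _ (fun=> 0)) => [|a ma]; last by have := u0 a; rewrite ma negbK => /eqP.
by apply/matrixP => a b; rewrite !mxE conjC0 !if_same.
Qed.

Lemma negroot_mx_bot_row (i : 'I_p) u c : negroot_mx i u (botix i) c = if mid c then (u c)^* else 0.
Proof. by rewrite mxE mid_bot eqxx. Qed.

Lemma negroot_mx_top_col (i : 'I_p) u c : negroot_mx i u c (topix i) = if mid c then u c else 0.
Proof. by rewrite mxE eqxx andbT mid_top andbF; case: ifP. Qed.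

Definition posroot_mx (j : 'I_p) (v : 'I_N -> C) : M := \matrix_(a, b)
  if (a == topix j) && mid b then v b else if mid a && (b == botix j) then (v a)^* else 0.

Lemma rootsp_posroot_mx (j : 'I_p) v : rootsp (alpha j) (posroot_mx j v).
Proof.
pose S (a b : 'I_N) := (a == topix j) && mid b || mid a && (b == botix j).
have suppS a b : posroot_mx j v a b != 0 -> S a b.
  by rewrite mxE /S /=; case: ifP => //; case: ifP => //; rewrite eqxx.
apply: rootsp_of_entry => [|t a b /suppS /orP[] /andP[]].
- apply: (in_h_of_support suppS) => [a b /orP[] /andP[]|a].
  + move=> /eqP -> mb; rewrite /Jskew_at Jperm_top Jperm_bot (Jperm_mid mb).
    rewrite Jsign_bot (Jsign_mid mb).
    by rewrite !mxE !ix_simpl mb (eq_mid_top _ mb) /= conjCK; ring.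
  + move=> ma /eqP ->; rewrite /Jskew_at JpermK (Jperm_mid ma) Jperm_bot Jsign_bot (Jsign_mid ma).
    by rewrite !mxE !ix_simpl ma (eq_mid_top _ ma) /=; ring.
  + rewrite mxE; case: ifP => [/andP[/eqP ea ma]|_]; first by rewrite ea mid_top in ma.
    by case: ifP => // /andP[ma /eqP ea]; rewrite ea mid_bot in ma.
- by move=> /eqP -> mb; rewrite (wt_mid _ mb) wt_top /alpha subr0.
- by move=> ma /eqP ->; rewrite (wt_mid _ ma) wt_bot /alpha sub0r opprK.
Qed.

Lemma posroot_mx_bot_col (j : 'I_p) v a : posroot_mx j v a (botix j) = if mid a then (v a)^* else 0.
Proof. by rewrite mxE mid_bot andbF eqxx andbT. Qed.

Lemma posroot_mx_top_row (j : 'I_p) v b : posroot_mx j v (topix j) b = if mid b then v b else 0.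
Proof. by rewrite mxE eqxx mid_top; case: ifP. Qed.

Lemma lie_posroot_mx_pairroot (i j : 'I_p) v (X0 : M) :
  rootsp (fun t => - alpha i t - alpha j t) X0 ->
  lie (posroot_mx j v) X0 = negroot_mx i (fun a => - (v a * X0 (botix i) (topix j))^*).
Proof.
move=> hX0; set x := X0 (botix i) (topix j).
have YX a b : (posroot_mx j v *m X0) a b = posroot_mx j v a (botix j) * X0 (botix j) b.
  rewrite mxE (sum_single (c0 := botix j)) // => c cj.
  have [->|/(pairroot_support hX0)] := eqVneq (X0 c b) 0; first by rewrite mulr0.
  rewrite (negbTE cj) /= orbF => /andP[/eqP ci _].
  by rewrite mxE (negbTE cj) andbF ci mid_bot andbF mul0r.
have XY a b : (X0 *m posroot_mx j v) a b = X0 a (topix j) * posroot_mx j v (topix j) b.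
  rewrite mxE (sum_single (c0 := topix j)) // => c cj.
  have [->|/(pairroot_support hX0)] := eqVneq (X0 a c) 0; first by rewrite mul0r.
  rewrite (negbTE cj) andbF /= => /andP[_ /eqP ci].
  by rewrite mxE (negbTE cj) ci mid_top mulr0.
apply/matrixP => a b; rewrite lie_entry YX XY (pairroot_col a hX0) (pairroot_row b hX0) -/x.
rewrite posroot_mx_bot_col posroot_mx_top_row mxE.
case ma: (mid a); first rewrite (eq_mid_bot _ ma) mul0r subr0.
  by case: eqP => _; rewrite ?mulr0 // rmorphM mulrN.
rewrite mul0r sub0r; have [-> /=|ai] := eqVneq a (botix i); last by rewrite mul0r oppr0.
by case: ifP => _; rewrite ?mulr0 ?oppr0 // raddfN /= conjCK mulrC.
Qed.

Lemma lie_negroot_mx_entry (i j : 'I_p) u v : i != j ->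
  lie (negroot_mx i u) (negroot_mx j v) (botix i) (topix j) = \sum_(c | mid c) (u c)^* * v c.
Proof.
move=> ij; rewrite lie_entry [in X in _ - X]mxE big1 ?subr0 => [|c _]; last first.
  by rewrite mxE mid_bot eq_bot (negbTE ij) mul0r.
rewrite mxE [RHS]big_mkcond /=; apply: eq_bigr => c _.
by rewrite negroot_mx_bot_row negroot_mx_top_col; case: ifP; rewrite ?mul0r.
Qed.

Lemma negroot_in_lie_posroot (i j : 'I_p) (X0 X : M) :
  rootsp (fun t => - alpha i t - alpha j t) X0 -> X0 != 0 ->
  rootsp (fun t => - alpha i t) X -> exists2 Y, rootsp (alpha j) Y & lie Y X0 = X.
Proof.
move=> hX0 nzX0 hX; have x0 := pairroot_neq0 hX0 nzX0.
exists (posroot_mx j (fun a => - (X a (topix i))^* / X0 (botix i) (topix j))).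
  exact: rootsp_posroot_mx.
rewrite (lie_posroot_mx_pairroot _ hX0) [RHS](negrootE hX); apply: eq_negroot_mx => a _.
by rewrite divfK // raddfN /= conjCK opprK.
Qed.

Lemma lie_negroot_neq0 (i j : 'I_p) (X0 : M) : i != j ->
  rootsp (fun t => - alpha j t) X0 -> X0 != 0 ->
  exists2 X, rootsp (fun t => - alpha i t) X & lie X X0 != 0.
Proof.
move=> ij hX0 nzX0; set u := fun a => X0 a (topix j).
have eX0 : X0 = negroot_mx j u := negrootE hX0.
have [k mk uk] : exists2 k, mid k & u k != 0 by apply: (negroot_mx_neq0 (i := j)); rewrite -eX0.
exists (negroot_mx i (fun c => if c == k then u k else 0)); first exact: rootsp_negroot_mx.
rewrite eX0; apply: contraNneq uk => /matrixP/(_ (botix i) (topix j)).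
rewrite lie_negroot_mx_entry // mxE (bigD1 k mk) /= eqxx big1 ?addr0 => [|c /andP[_ /negbTE ->]].
  by move/eqP; rewrite mulf_eq0 conjC_eq0 orbb.
by rewrite conjC0 mul0r.
Qed.

Lemma aH0 : aH p q (fun=> 0) = 0 :> M.
Proof. by apply/matrixP => a b; rewrite !mxE oppr0 !if_same. Qed.

Lemma sum_delta (k0 : 'I_p) (Y : M) : \sum_(k < p) (if k == k0 then Y else 0) = Y.
Proof. by rewrite -big_mkcond big_pred1_eq. Qed.

Lemma sum2_delta (P : 'I_p -> 'I_p -> bool) (i0 j0 : 'I_p) (Y : M) : P i0 j0 ->
  \sum_(i < p) \sum_(j < p | P i j) (if (i == i0) && (j == j0) then Y else 0) = Y.
Proof.
move=> Pij; rewrite (bigD1 i0) //= [X in _ + X]big1 => [|i /negbTE ii0]; last first.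
  by rewrite big1 // => j _; rewrite ii0.
by rewrite addr0 (bigD1 j0) //= !eqxx big1 ?addr0 // => j /andP[_ /negbTE ->]; rewrite andbF.
Qed.

Lemma sum2_0 (P : 'I_p -> 'I_p -> bool) : \sum_(i < p) \sum_(j < p | P i j) (0 : M) = 0.
Proof. by rewrite big1 // => i _; rewrite big1_eq. Qed.

Lemma in_bH_alpha (k0 : 'I_p) (Y : M) : rootsp (alpha k0) Y -> in_bH Y.
Proof.
move=> hY; exists (fun=> 0), (fun k => if k == k0 then Y else 0), (fun _ _ => 0), (fun _ _ => 0).
split=> [k|]; first by case: eqP => [->|_]; last exact: rootsp0.
split=> [i j _|]; first exact: rootsp0.
split=> [i j _|]; first exact: rootsp0.
by rewrite aH0 sum_delta !sum2_0 add0r !addr0.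
Qed.

Lemma in_bH_alpha_sub (i0 j0 : 'I_p) (Y : M) : (i0 < j0)%N ->
  rootsp (fun s => alpha i0 s - alpha j0 s) Y -> in_bH Y.
Proof.
move=> ij hY; exists (fun=> 0), (fun=> 0), (fun i j => if (i == i0) && (j == j0) then Y else 0).
exists (fun _ _ => 0); split=> [k|]; first exact: rootsp0.
split=> [i j _|]; first by do 2 case: eqP => [->|_]; rewrite /=; try exact: rootsp0.
split=> [i j _|]; first exact: rootsp0.
by rewrite aH0 (@sum2_delta (fun i j => i < j)%N) // sum2_0 big1_eq !add0r addr0.
Qed.

Lemma in_bH_alpha_add (i0 j0 : 'I_p) (Y : M) : (i0 <= j0)%N ->
  rootsp (fun s => alpha i0 s + alpha j0 s) Y -> in_bH Y.
Proof.
move=> ij hY; exists (fun=> 0), (fun=> 0), (fun _ _ => 0).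
exists (fun i j => if (i == i0) && (j == j0) then Y else 0); split=> [k|]; first exact: rootsp0.
split=> [i j _|]; first exact: rootsp0.
split=> [i j _|]; first by do 2 case: eqP => [->|_]; rewrite /=; try exact: rootsp0.
by rewrite aH0 (@sum2_delta (fun i j => i <= j)%N) // sum2_0 big1_eq !add0r.
Qed.

Section Invariant.
Variable h0 : M -> Prop.
Hypotheses (h0_subalg : is_subalg h0) (h0_inv : adb_invariant h0).

(* [[Y, aH t] = - lam t *: Y] lies in [h0] by [ad b_H]-invariance. *)
Lemma root_in_h0 lam (t : nat -> R) (Y : M) :
  h0 (aH p q t) -> rootsp lam Y -> lam t != 0 -> in_bH Y -> h0 Y.
Proof.
have [_ [_ [_ [h0_scale _]]]] := h0_subalg; move=> h0H [_ adY] lam_nz bY.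
move: (h0_inv bY h0H); rewrite lieC adY => /(h0_scale (- (lam t)^-1)).
by rewrite scalerN scalerA -rmorphM /= mulNr mulVf // rmorphN rmorph1 scaleN1r opprK.
Qed.

Lemma bH_sub_h0 : (forall X, in_aH X -> h0 X) -> forall X, in_bH X -> h0 X.
Proof.
move=> aH_h0 X [t [Y1 [Y2 [Y3 [h1 [h2 [h3 ->]]]]]]].
have [_ [h0_zero [h0_add _]]] := h0_subalg.
pose d (k : 'I_p) : nat -> R := fun n => if n == k then 1 else 0.
have h0d k : h0 (aH p q (d k)) by apply: aH_h0; exists (d k).
have d_self k : d k k = 1 by rewrite /d eqxx.
apply: (h0_add); [apply: (h0_add); [apply: (h0_add)|]|].
- by apply: aH_h0; exists t.
- apply: (big_ind h0) => // k _; apply: (root_in_h0 (h0d k) (h1 k)).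
    by rewrite /alpha d_self oner_neq0.
  exact: in_bH_alpha (h1 k).
- apply: (big_ind h0) => // i _; apply: (big_ind h0) => // j ij.
  apply: (root_in_h0 (h0d i) (h2 i j ij)); last exact: in_bH_alpha_sub ij (h2 i j ij).
  by rewrite /alpha d_self /d ifN ?subr0 ?oner_neq0 // neq_ltn ij orbT.
- apply: (big_ind h0) => // i _; apply: (big_ind h0) => // j ij.
  apply: (root_in_h0 (h0d i) (h3 i j ij)); last exact: in_bH_alpha_add ij (h3 i j ij).
  by rewrite /alpha d_self /d; case: ifP => _; apply/eqP; lra.
Qed.

Lemma negroot_sub_h0 (i j : 'I_p) :
  (exists X, rootsp (fun t => - alpha i t - alpha j t) X /\ X <> 0 /\ h0 X) ->
  forall X, rootsp (fun t => - alpha i t) X -> h0 X.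
Proof.
move=> [X0 [hX0 [/eqP nzX0 h0X0]]] X hX.
have [Y hY <-] := negroot_in_lie_posroot hX0 nzX0 hX.
exact: h0_inv (in_bH_alpha hY) h0X0.
Qed.

Lemma negroot_sub_h0_of_negroot (i j : 'I_p) : i <> j ->
  (forall X, rootsp (fun t => - alpha i t) X -> h0 X) ->
  (exists X, rootsp (fun t => - alpha j t) X /\ X <> 0 /\ h0 X) ->
  forall X, rootsp (fun t => - alpha j t) X -> h0 X.
Proof.
move=> /eqP ij negi_h0 [X0 [hX0 [/eqP nzX0 h0X0]]].
have [X hX nz] := lie_negroot_neq0 ij hX0 nzX0.
apply: (negroot_sub_h0 (j := i)); exists (lie X X0); split; last split; last 1 first.
- by have [_ [_ [_ [_ h0_lie]]]] := h0_subalg; apply: h0_lie (negi_h0 X hX) h0X0.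
- by apply: rootsp_ext (rootsp_lie hX hX0) => t; rewrite addrC.
- exact/eqP.
Qed.

End Invariant.

End SUpq.

Theorem mainTheorem6 (R : realType) (p q : nat)
    (h0 : 'M[complex R]_(Nsz p q) -> Prop) :
  (0 < p)%N -> (p < q)%N ->
  is_subalg h0 -> adb_invariant h0 ->
  ((forall X, in_aH X -> h0 X) -> forall X, in_bH X -> h0 X) /\
  (forall i j : 'I_p,
     (exists X, rootsp (fun t => - alpha i t - alpha j t) X /\ X <> 0 /\ h0 X) ->
     forall X, rootsp (fun t => - alpha i t) X -> h0 X) /\
  ((2 <= p)%N -> forall i j : 'I_p, i <> j ->
     (forall X, rootsp (fun t => - alpha i t) X -> h0 X) ->
     (exists X, rootsp (fun t => - alpha j t) X /\ X <> 0 /\ h0 X) ->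
     forall X, rootsp (fun t => - alpha j t) X -> h0 X).
Proof.
move=> _ ltn_pq h0_subalg h0_inv; split; first exact: bH_sub_h0.
split; first exact: negroot_sub_h0.
by move=> _; apply: negroot_sub_h0_of_negroot.
Qed.
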